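(* Let $\mathbb{R}^n_s$ be $\mathbb{R}^n$ with a non-degenerate symmetric bilinear form of signature $(n-s,s)$, let $G\subset\mathrm{Iso}(\mathbb{R}^n_s)$ be a real Zariski-closed subgroup whose centralizer $L=\mathrm{Z}_{\mathrm{Iso}(\mathbb{R}^n_s)}(G)$ acts transitively on $\mathbb{R}^n$, and let $U$ be the unipotent radical of $L$; assume $U$ acts transitively on $\mathbb{R}^n$. Fix $p\in\mathbb{R}^n$, let $F_p=G.p$, $U_p$ the stabilizer of $p$ in $U$, $U_{F_p}=\{u\in U\mid u.F_p\subseteq F_p\}$ (a subgroup containing $U_p$ as a normal subgroup) and $\tilde U=U_{F_p}/U_p$, acting on $U/U_p$ from the right by $uU_p\cdot \tilde u U_p=u\tilde uU_p$. Let $\Psi:U/U_p\to\mathbb{R}^n$, $uU_p\mapsto u.p$. Then $\Psi$ induces a bijection from the set of orbits of the right action of $\tilde U$ on $U/U_p$ to the set of orbits of $G$ on $\mathbb{R}^n$; more precisely, $\Psi$ maps the orbit $uU_p\cdot\tilde U$ onto the orbit $G.(u.p)$. *)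

From mathcomp Require Import all_boot all_order all_algebra.
From mathcomp Require Import reals.
From mathcomp Require mpoly.
Set Implicit Arguments. Unset Strict Implicit. Unset Printing Implicit Defensive.
Import Order.TTheory GRing.Theory Num.Theory.
Local Open Scope ring_scope.

Section PseudoEuclidean.
Variables (R : realType) (n s : nat).

(* standard form of signature (n-s, s) on R^n (column vectors):
   B(x,y) = x^T J y with J = diag(1,..,1,-1,..,-1), s entries -1 *)
Definition formJ : 'M[R]_n :=
  \matrix_(i, j) (if i == j then (if (i < n - s)%N then 1 else -1) else 0).

Definition aff := ('M[R]_n * 'cV[R]_n)%type.

Definition act (g : aff) (x : 'cV[R]_n) : 'cV[R]_n := g.1 *m x + g.2.

Definition in_Iso (g : aff) : Prop := g.1^T *m formJ *m g.1 = formJ.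

Definition aff_mul (g h : aff) : aff := (g.1 *m h.1, g.1 *m h.2 + g.2).
Definition aff_one : aff := (1%:M, 0).
Definition aff_inv (g : aff) : aff := (invmx g.1, - (invmx g.1 *m g.2)).

Definition is_subgroup (H : aff -> Prop) : Prop :=
  [/\ H aff_one, (forall g h, H g -> H h -> H (aff_mul g h))
    & (forall g, H g -> H (aff_inv g))].

Definition normal_in (N H : aff -> Prop) : Prop :=
  forall h u, H h -> N u -> N (aff_mul (aff_mul h u) (aff_inv h)).

Definition coords (g : aff) : 'I_(n * n + n) -> R :=
  fun i => match split i with
           | inl j => mxvec g.1 0 j
           | inr j => g.2 j 0
           end.

Definition zariski_closed (H : aff -> Prop) : Prop :=
  exists S : mpoly.mpoly (n * n + n) R -> Prop,
    forall g, H g <-> (in_Iso g /\ forall p, S p -> mpoly.meval (coords g) p = 0).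

(* unipotent affine map (its (n+1)x(n+1) matrix is unipotent iff the linear
   part is) *)
Definition unipotent (g : aff) : Prop := (g.1 - 1%:M) ^+ n = 0.

Definition centralizer (G : aff -> Prop) : aff -> Prop :=
  fun h => in_Iso h /\ forall g, G g -> aff_mul h g = aff_mul g h.

Definition acts_transitively (H : aff -> Prop) : Prop :=
  forall x y : 'cV[R]_n, exists h, H h /\ act h x = y.

(* unipotent radical of the real algebraic group L: the largest normal
   Zariski-closed subgroup of L consisting of unipotent elements
   (in characteristic 0 unipotent algebraic groups are connected) *)
Definition is_unipotent_radical (L U : aff -> Prop) : Prop :=
  [/\ is_subgroup U, (forall u, U u -> L u), normal_in U L, zariski_closed U
    & (forall u, U u -> unipotent u)] /\
  (forall N : aff -> Prop, is_subgroup N -> (forall u, N u -> L u) ->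
        normal_in N L -> zariski_closed N -> (forall u, N u -> unipotent u) ->
        forall u, N u -> U u).

Definition aff_orbit (G : aff -> Prop) (x : 'cV[R]_n) : 'cV[R]_n -> Prop :=
  fun y => exists g, G g /\ y = act g x.

Definition stab (U : aff -> Prop) (p : 'cV[R]_n) : aff -> Prop :=
  fun u => U u /\ act u p = p.

Definition stab_orbit (U G : aff -> Prop) (p : 'cV[R]_n) : aff -> Prop :=
  fun u => U u /\ forall y, aff_orbit G p y -> aff_orbit G p (act u y).

End PseudoEuclidean.

From mathcomp Require Import all_boot all_order all_algebra.
From mathcomp Require Import reals.
Local Open Scope ring_scope.
Import GRing.Theory.
Set Implicit Arguments. Unset Strict Implicit.

(* Since U commutes with G, every u in U maps G-orbits onto G-orbits:
   u.(G.x) = G.(u.x).  Hence u lies in U_{F_p} iff u.p lies in G.p, the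
   U~-orbit of uU_p is sent by Psi onto u.(G.p) = G.(u.p), and transitivity
   of U makes every G-orbit of the form G.(u.p). *)

Section AffineAction.
Variables (R : realType) (n : nat).
Implicit Types (g h : aff R n) (x : 'cV[R]_n).

Lemma act_mul g h x : act (aff_mul g h) x = act g (act h x).
Proof. by rewrite /act /= mulmxDr !mulmxA addrA. Qed.

Lemma act_one x : act (aff_one R n) x = x.
Proof. by rewrite /act /= mul1mx addr0. Qed.

Lemma act_invK g x : g.1 \in unitmx -> act (aff_inv g) (act g x) = x.
Proof.
by move=> ug; rewrite /act /= mulmxDr mulmxA mulVmx // mul1mx addrK.
Qed.

Lemma act_invVK g x : g.1 \in unitmx -> act g (act (aff_inv g) x) = x.
Proof.
by move=> ug; rewrite /act /= mulmxDr mulmxN !mulmxA mulmxV // !mul1mx addrNK.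
Qed.

Lemma formJ_mulmx_id (s : nat) : formJ R n s *m formJ R n s = 1%:M.
Proof.
have -> : formJ R n s = diag_mx (\row_j (if (j < n - s)%N then 1 else -1 : R)).
  by apply/matrixP=> i j; rewrite !mxE; case: eqP => [->|_]; rewrite ?mulr1n.
rewrite mul_diag_mx; apply/matrixP=> i j; rewrite !mxE.
case: eqP => [->|_]; rewrite ?mulr1n ?mulr0n ?mulr0 //.
by case: ifP; rewrite ?mulr1 ?mulrNN ?mulr1.
Qed.

Lemma in_Iso_unitmx (s : nat) g : in_Iso s g -> g.1 \in unitmx.
Proof.
move=> isog; suff : (formJ R n s *m g.1^T *m formJ R n s) *m g.1 = 1%:M.
  by case/mulmx1_unit.
by rewrite -!mulmxA (mulmxA g.1^T) isog formJ_mulmx_id.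
Qed.

End AffineAction.

Section OrbitCorrespondence.
Variables (R : realType) (n : nat) (G U : aff R n -> Prop).
Implicit Types (g h u v : aff R n) (x y p : 'cV[R]_n).

Hypothesis G_subgroup : is_subgroup G.
Hypothesis G_unitmx : forall g, G g -> g.1 \in unitmx.
Hypothesis U_subgroup : is_subgroup U.
Hypothesis U_unitmx : forall u, U u -> u.1 \in unitmx.
Hypothesis U_commute_G : forall u g, U u -> G g -> aff_mul u g = aff_mul g u.
Hypothesis U_transitive : acts_transitively U.

Lemma act_commute u g x : U u -> G g -> act u (act g x) = act g (act u x).
Proof. by move=> Uu Gg; rewrite -!act_mul U_commute_G. Qed.

Lemma aff_orbit_act g x y : G g -> aff_orbit G (act g x) y <-> aff_orbit G x y.
Proof.
case: G_subgroup => _ GM GV Gg; split=> -[h [Gh ->]].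
  by exists (aff_mul h g); rewrite act_mul; split=> //; apply: GM.
exists (aff_mul h (aff_inv g)); rewrite act_mul act_invK ?G_unitmx //.
by split=> //; apply/GM/GV.
Qed.

Lemma stab_orbitP p u : stab_orbit U G p u <-> U u /\ aff_orbit G p (act u p).
Proof.
case: G_subgroup => G1 GM _; split=> -[Uu orbit_u]; split=> //.
  by apply: orbit_u; exists (aff_one R n); rewrite act_one.
move=> _ [g [Gg ->]]; case: orbit_u => g0 [Gg0 up].
by rewrite act_commute // up -act_mul; exists (aff_mul g g0); split=> //; apply: GM.
Qed.

Lemma act_inv_orbit p u g :
  U u -> G g -> act u p = act g p -> act (aff_inv u) p = act (aff_inv g) p.
Proof.
case: G_subgroup U_subgroup => _ _ GV [_ _ UV] Uu Gg ugp.
have [Uu' Gg'] := (UV _ Uu, GV _ Gg).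
by rewrite -{1}(act_invK p (G_unitmx Gg)) act_commute // -ugp act_invK ?U_unitmx.
Qed.

Lemma stab_orbit_subgroup p : is_subgroup (stab_orbit U G p).
Proof.
case: G_subgroup U_subgroup => G1 GM GV [U1 UM UV]; split.
- by apply/stab_orbitP; split=> //; exists (aff_one R n); rewrite !act_one.
- move=> g h /stab_orbitP [Ug [g0 [Gg0 gp]]] /stab_orbitP [Uh [h0 [Gh0 hp]]].
  apply/stab_orbitP; split; first exact: UM.
  rewrite act_mul hp act_commute // gp -act_mul.
  by exists (aff_mul h0 g0); split=> //; apply: GM.
- move=> g /stab_orbitP [Ug [g0 [Gg0 gp]]]; apply/stab_orbitP.
  split; first exact: UV.
  by rewrite (act_inv_orbit Ug Gg0 gp); exists (aff_inv g0); split=> //; apply: GV.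
Qed.

Lemma stab_sub_stab_orbit p u : stab U p u -> stab_orbit U G p u.
Proof.
case: G_subgroup => G1 _ _ [Uu up]; apply/stab_orbitP; split=> //.
by exists (aff_one R n); rewrite up act_one.
Qed.

Lemma stab_normal_in_stab_orbit p : normal_in (stab U p) (stab_orbit U G p).
Proof.
case: G_subgroup U_subgroup => _ _ GV [_ UM UV].
move=> h u /stab_orbitP [Uh [g [Gg hp]]] [Uu up].
split; first exact: (UM _ _ (UM _ _ Uh Uu) (UV _ Uh)).
have Gg' := GV _ Gg.
by rewrite !act_mul (act_inv_orbit Uh Gg hp) [act u _]act_commute // up act_commute // hp act_invK ?G_unitmx.
Qed.

Lemma coset_orbit_image p u x : U u ->
  (exists ut, stab_orbit U G p ut /\ x = act (aff_mul u ut) p) <->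
  aff_orbit G (act u p) x.
Proof.
move=> Uu; split.
  case=> ut [/stab_orbitP [_ [g [Gg utp]]] ->].
  by exists g; rewrite act_mul utp [LHS]act_commute.
case=> g [Gg ->]; have [ut [Uut utp]] := U_transitive p (act g p).
exists ut; split; first by apply/stab_orbitP; split=> //; exists g.
by rewrite act_mul utp [RHS]act_commute.
Qed.

Lemma same_coset_orbit p u v : U u -> U v ->
  (exists ut, stab_orbit U G p ut /\ stab U p (aff_mul (aff_inv (aff_mul u ut)) v))
  <-> (forall x, aff_orbit G (act u p) x <-> aff_orbit G (act v p) x).
Proof.
case: U_subgroup => _ UM UV Uu Uv; split.
  case=> ut [UFut [_ ut_v]].
  have Uuut : U (aff_mul u ut) by apply: (UM _ _ Uu); case/stab_orbitP: UFut.
  have vp : act v p = act (aff_mul u ut) p.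
    by rewrite -{2}ut_v [act (aff_mul (aff_inv _) _) _]act_mul act_invVK ?U_unitmx.
  have [g [Gg ->]] : aff_orbit G (act u p) (act v p).
    by apply/coset_orbit_image => //; exists ut.
  by move=> x; symmetry; apply: aff_orbit_act.
move=> same_orbit; have : aff_orbit G (act u p) (act v p).
  by apply/same_orbit; exists (aff_one R n); rewrite act_one; case: G_subgroup.
case/coset_orbit_image => // ut [UFut vp]; exists ut; split=> //.
have Uuut : U (aff_mul u ut) by apply: (UM _ _ Uu); case/stab_orbitP: UFut.
by split; [apply: UM (UV _ Uuut) Uv | rewrite act_mul vp act_invK ?U_unitmx].
Qed.

Lemma orbit_of_U_point p x : exists u, U u /\
  (forall y, aff_orbit G x y <-> aff_orbit G (act u p) y).
Proof. by have [u [Uu <-]] := U_transitive p x; exists u. Qed.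

End OrbitCorrespondence.

Theorem lemma6p7 (R : realType) (n s : nat) (hs : (s <= n)%N)
  (G : aff R n -> Prop)
  (hGIso : forall g, G g -> in_Iso s g)
  (hGsub : is_subgroup G)
  (hGzar : zariski_closed s G)
  (hLtr : acts_transitively (centralizer s G))
  (U : aff R n -> Prop)
  (hU : is_unipotent_radical s (centralizer s G) U)
  (hUtr : acts_transitively U)
  (p : 'cV[R]_n) :
  let Up := stab U p in
  let UF := stab_orbit U G p in
  (* U_{F_p} is a subgroup containing U_p as a normal subgroup *)
  [/\ is_subgroup UF, (forall u, Up u -> UF u) & normal_in Up UF] /\
  [/\
  (* Psi maps the orbit uU_p . U~ onto G.(u.p) *)
      (forall u, U u -> forall x,
         (exists ut, UF ut /\ x = act (aff_mul u ut) p) <-> aff_orbit G (act u p) x),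
  (* the induced map on orbit sets is well defined and injective:
     uU_p and vU_p lie in the same U~-orbit iff G.(u.p) = G.(v.p) *)
      (forall u v, U u -> U v ->
         ((exists ut, UF ut /\ Up (aff_mul (aff_inv (aff_mul u ut)) v))
          <-> (forall x, aff_orbit G (act u p) x <-> aff_orbit G (act v p) x)))
  (* and surjective: every G-orbit is G.(u.p) for some u in U *)
    & (forall x, exists u, U u /\
         (forall y, aff_orbit G x y <-> aff_orbit G (act u p) y))].
Proof.
move=> Up UF.
have [[U_subgroup U_centralize _ _ _] _] := hU.
have G_unitmx g : G g -> g.1 \in unitmx by move/hGIso/in_Iso_unitmx.
have U_unitmx u : U u -> u.1 \in unitmx by case/U_centralize => /in_Iso_unitmx.
have U_commute_G u g : U u -> G g -> aff_mul u g = aff_mul g u.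
  by move=> /U_centralize [_ commute_u]; apply: commute_u.
split; split.
- exact: stab_orbit_subgroup.
- exact: stab_sub_stab_orbit.
- exact: stab_normal_in_stab_orbit.
- by move=> u Uu x; apply: coset_orbit_image.
- exact: same_coset_orbit.
- exact: orbit_of_U_point.
Qed.
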